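(* Let $n\ge 3$, and let $F$ be the free group on $s_1,\dots,s_{n-1}$ and $R$ the normal closure in $F$ of the relators $[s_i,s_j]$ ($1\le i<j-1\le n-2$), $[s_i,s_{i+1},s_i]$ and $[s_i,s_{i+1},s_{i+1}]$ ($1\le i\le n-2$), $[[s_i,s_{i+1}],[s_{i+1},s_{i+2}]]$ ($1\le i\le n-3$), so that $F/R\cong\mathrm{UT}_n(\mathbb Z)$. Suppose that for integers $a_{ij}$ ($1\le i<j-1\le n-2$), $b_i,c_i$ ($1\le i\le n-2$) and $d_i\in\{0,1\}$ ($1\le i\le n-3$) the element $$\prod_{i<j-1}[s_i,s_j]^{a_{ij}}\cdot\prod_i[s_i,s_{i+1},s_i]^{b_i}\cdot\prod_i[s_i,s_{i+1},s_is_{i+1}^{-1}]^{c_i}\cdot\prod_i[[s_i,s_{i+1}],[s_{i+1},s_{i+2}]]^{d_i}$$ lies in $[R,F]$. Then all $a_{ij},b_i,c_i,d_i$ are zero.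
   Context: Commutator conventions: $[a,b]=a^{-1}b^{-1}ab$, and commutators are left-normed: $[a_1,\dots,a_k]=[[a_1,\dots,a_{k-1}],a_k]$. The isomorphism $F/R\cong\mathrm{UT}_n(\mathbb Z)$ sends $s_i$ to $I+E_{i,i+1}$. *)

From Stdlib Require Import ZArith.
From mathcomp Require Import all_boot.
Set Implicit Arguments. Unset Strict Implicit. Unset Printing Implicit Defensive.

(* a letter (k, e): generator s_k if e = false, s_k^{-1} if e = true *)
Definition letter := (nat * bool)%type.
Definition word := seq letter.

Definition wordF (n : nat) (w : word) : bool := all (fun l => (0 < l.1 < n)%N) w.

Definition reduce (w : word) : word :=
  foldr (fun x acc => match acc with
                      | y :: t => if (y.1 == x.1) && (y.2 != x.2) then t else x :: acc
                      | [::] => [:: x] end) [::] w.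

Definition feq (u v : word) : Prop := reduce u = reduce v.

Definition winv (w : word) : word := rev (map (fun l => (l.1, ~~ l.2)) w).

Definition gen (k : nat) : word := [:: (k, false)].
Definition geninv (k : nat) : word := [:: (k, true)].

Definition comm (a b : word) : word := winv a ++ winv b ++ a ++ b.
Definition comm3 (a b c : word) : word := comm (comm a b) c.

Definition wpow (w : word) (z : Z) : word :=
  if (0 <=? z)%Z then flatten (nseq (Z.to_nat z) w)
  else flatten (nseq (Z.to_nat (- z)) (winv w)).

Definition relator (n : nat) (r : word) : Prop :=
  (exists i j, [/\ (1 <= i)%N, (i.+1 < j)%N, (j <= n - 1)%N &
                  r = comm (gen i) (gen j)])
  \/ (exists i, [/\ (1 <= i)%N, (i <= n - 2)%N &
                  r = comm3 (gen i) (gen i.+1) (gen i)])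
  \/ (exists i, [/\ (1 <= i)%N, (i <= n - 2)%N &
                  r = comm3 (gen i) (gen i.+1) (gen i.+1)])
  \/ (exists i, [/\ (1 <= i)%N, (i <= n - 3)%N &
                  r = comm (comm (gen i) (gen i.+1)) (comm (gen i.+1) (gen i.+2))]).

Inductive inR (n : nat) : word -> Prop :=
| inR_nil : inR n [::]
| inR_conj : forall r g, relator n r -> wordF n g -> inR n (winv g ++ r ++ g)
| inR_mul : forall u v, inR n u -> inR n v -> inR n (u ++ v)
| inR_inv : forall u, inR n u -> inR n (winv u)
| inR_eq : forall u v, inR n u -> wordF n v -> feq u v -> inR n v.

Inductive inRF (n : nat) : word -> Prop :=
| inRF_nil : inRF n [::]
| inRF_comm : forall r f, inR n r -> wordF n f -> inRF n (comm r f)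
| inRF_mul : forall u v, inRF n u -> inRF n v -> inRF n (u ++ v)
| inRF_inv : forall u, inRF n u -> inRF n (winv u)
| inRF_eq : forall u v, inRF n u -> wordF n v -> feq u v -> inRF n v.

Definition theElement (n : nat) (a : nat -> nat -> Z) (b c d : nat -> Z) : word :=
  flatten [seq wpow (comm (gen i) (gen j)) (a i j)
          | i <- iota 1 (n - 1), j <- iota (i + 2) (n - 2 - i)]
  ++ flatten [seq wpow (comm3 (gen i) (gen i.+1) (gen i)) (b i) | i <- iota 1 (n - 2)]
  ++ flatten [seq wpow (comm3 (gen i) (gen i.+1) (gen i ++ geninv i.+1)) (c i)
             | i <- iota 1 (n - 2)]
  ++ flatten [seq wpow (comm (comm (gen i) (gen i.+1)) (comm (gen i.+1) (gen i.+2))) (d i)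
             | i <- iota 1 (n - 3)].

(* The relation module R/[R,F] is central in F/[R,F], so every homomorphism
   from F to a group G that sends each defining relator into the centre of G
   kills [R,F] (lemma [evw_inRF]).  We evaluate words in such "test groups" G:
   the group of upper unitriangular 5x5 matrices over a commutative ring, with
   the top-right corner playing the role of a central copy of the ring.

   For a suitable assignment of the generators s_k, every factor of the
   element of the theorem evaluates to a corner matrix, and the whole element
   to the corner matrix of a weighted sum of its exponents (lemma [detect]);
   membership in [R,F] forces that sum to vanish.  Four assignments isolate
   the exponents:
   - over Z, s_i, s_j go to 1 + E12, 1 + E25 and detect a_ij;
   - over Z, two assignments of s_i, s_(i+1) detect b_i and c_i;
   - over F_2, s_i, s_(i+1), s_(i+2) go to 1 + E12, 1 + E23 + E45, 1 + E34
     and detect d_i modulo 2.  Over Z this assignment would send the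
     relator [s_(i+1), s_(i+2), s_(i+1)] to the non-central matrix 1 + 2 E25;
     this is why only the parity of d_i is detected, and d_i is assumed to be
     0 or 1.
   (E_ij denotes a matrix unit.) *)

From HB Require Import structures.
From Stdlib Require Import ZArith Lia.
From mathcomp Require Import all_boot zify.
From mathcomp Require all_algebra ssrZ ring.
Set Implicit Arguments. Unset Strict Implicit. Unset Printing Implicit Defensive.

Section WordEvaluation.
Local Open Scope group_scope.
Variables (G : groupType) (s : nat -> G).

Definition evl (l : letter) : G := if l.2 then (s l.1)^-1 else s l.1.
Definition evw (w : word) : G := \prod_(l <- w) evl l.

Lemma evw_cons l w : evw (l :: w) = evl l * evw w.
Proof. exact: big_cons. Qed.

Lemma evw_cat u v : evw (u ++ v) = evw u * evw v.
Proof. exact: big_cat. Qed.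

Lemma evw_flatten (ws : seq word) : evw (flatten ws) = \prod_(w <- ws) evw w.
Proof. exact: big_flatten. Qed.

Lemma evw_gen k : evw (gen k) = s k.
Proof. exact: big_seq1. Qed.

Lemma evw_geninv k : evw (geninv k) = (s k)^-1.
Proof. exact: big_seq1. Qed.

Lemma evw_winv w : evw (winv w) = (evw w)^-1.
Proof.
rewrite /evw /winv -map_rev big_map -[w in RHS]revK -prodgV.
by apply: eq_bigr => -[k []] _; rewrite /evl /= ?invgK.
Qed.

Lemma evw_reduce w : evw (reduce w) = evw w.
Proof.
elim: w => [|x w IH] //=; rewrite evw_cons -IH.
case: (reduce w) => [|y t] /=; first by rewrite evw_cons.
case: ifP => [/andP[/eqP y1 y2]|_]; last exact: evw_cons.
rewrite !evw_cons mulgA /evl y1; case: y.2 x.2 y2 => -[] //= _.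
  by rewrite mulgV mul1g.
by rewrite mulVg mul1g.
Qed.

Lemma evw_feq u v : feq u v -> evw u = evw v.
Proof. by move=> uv; rewrite -evw_reduce uv evw_reduce. Qed.

Lemma evw_comm u v : evw (comm u v) = [~ evw u, evw v].
Proof. by rewrite /comm !evw_cat !evw_winv. Qed.

Definition central (x : G) : Prop := forall y, commute x y.

Lemma central1 : central 1.
Proof. by move=> y; rewrite /commute mul1g mulg1. Qed.

Lemma centralM x y : central x -> central y -> central (x * y).
Proof. by move=> cx cy z; apply/commute_sym/commuteM; apply/commute_sym. Qed.

Lemma centralV x : central x -> central x^-1.
Proof. by move=> cx y; apply/commute_sym/commuteV/commute_sym. Qed.

Lemma central_conjg x y : central x -> x ^ y = x.
Proof. by move=> cx; rewrite conjgE (cx y) mulKg. Qed.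

Lemma central_commg x y : central x -> [~ x, y] = 1.
Proof. by move=> cx; rewrite commgEl central_conjg // mulVg. Qed.

Section NormalClosure.
Variable n : nat.
Hypothesis relator_central : forall r, relator n r -> central (evw r).

Lemma evw_inR w : inR n w -> central (evw w).
Proof.
elim=> {w} [|r g /relator_central cr _|u v _ cu _ cv|u _ cu|u v _ cu _ /evw_feq <- //].
- by rewrite /evw big_nil; apply: central1.
- by rewrite !evw_cat evw_winv -conjgE central_conjg.
- by rewrite evw_cat; apply: centralM.
- by rewrite evw_winv; apply: centralV.
Qed.

Lemma evw_inRF w : inRF n w -> evw w = 1.
Proof.
elim=> {w} [|r f /evw_inR cr _|u v _ eu _ ev|u _ eu|u v _ eu _ /evw_feq <- //].
- exact: big_nil.
- by rewrite evw_comm central_commg.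
- by rewrite evw_cat eu ev mulg1.
- by rewrite evw_winv eu invg1.
Qed.
End NormalClosure.
End WordEvaluation.

(* The algebra library rebinds the scope key %Z to its integers [int]; it is
   imported only inside this module, so that %Z keeps denoting Stdlib's Z in
   the final statement. *)
Module TestGroups.
Import all_algebra ssrZ ring GRing.Theory.

Definition weighted_exponents (R : zmodType) n a b c d
    (wa : nat -> nat -> R) (wb wc wd : nat -> R) : R :=
  (\sum_(k <- iota 1 (n - 1)) \sum_(l <- iota (k + 2) (n - 2 - k)) wa k l *~ int_of_Z (a k l)
   + \sum_(k <- iota 1 (n - 2)) wb k *~ int_of_Z (b k)
   + \sum_(k <- iota 1 (n - 2)) wc k *~ int_of_Z (c k)
   + \sum_(k <- iota 1 (n - 3)) wd k *~ int_of_Z (d k))%R.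

Section CentralValues.
Local Open Scope group_scope.
Variables (G : groupType) (s : nat -> G) (R : zmodType) (phi : R -> G).
Hypothesis phiD : {morph phi : x y / (x + y)%R >-> x * y}.
Hypothesis phi_central : forall x, central (phi x).

Lemma phi0 : phi 0%R = 1.
Proof. by apply: (@mulgI _ (phi 0%R)); rewrite -phiD addr0 mulg1. Qed.

Lemma phiN x : phi (- x)%R = (phi x)^-1.
Proof. by apply/esym/mulg1_eq; rewrite -phiD subrr phi0. Qed.

Lemma evw_nseq w r m : evw s w = phi r -> evw s (flatten (nseq m w)) = phi (r *+ m)%R.
Proof.
move=> wr; elim: m => [|m IH]; first by rewrite phi0 /evw big_nil.
by rewrite /= evw_cat IH wr mulrS phiD.
Qed.

Lemma evw_wpow w r z : evw s w = phi r -> evw s (wpow w z) = phi (r *~ int_of_Z z)%R.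
Proof.
move=> wr; case: z => [|p|p]; rewrite /wpow /=; first by rewrite phi0 /evw big_nil.
  exact: evw_nseq.
have pos : (0 < Pos.to_nat p)%N by apply/ltP/Pos2Nat.is_pos.
rewrite NegzE prednK // mulrNz -mulNrn; apply: evw_nseq.
by rewrite evw_winv wr phiN.
Qed.

Lemma prod_phi (t : seq nat) (x : nat -> G) (f : nat -> R) :
  {in t, forall k, x k = phi (f k)} ->
  \prod_(k <- t) x k = phi (\sum_(k <- t) f k)%R.
Proof. by move=> xf; rewrite (big_morph phi phiD phi0); apply: eq_big_seq. Qed.

Lemma evw_theElement n a b c d (wa : nat -> nat -> R) (wb wc wd : nat -> R) :
  (forall k l, (k.+1 < l)%N -> [~ s k, s l] = phi (wa k l)) ->
  (forall k, [~ s k, s k.+1, s k] = phi (wb k)) ->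
  (forall k, [~ s k, s k.+1, s k * (s k.+1)^-1] = phi (wc k)) ->
  (forall k, [~ [~ s k, s k.+1], [~ s k.+1, s k.+2]] = phi (wd k)) ->
  evw s (theElement n a b c d) = phi (weighted_exponents n a b c d wa wb wc wd).
Proof.
move=> ha hb hc hd; rewrite /theElement !evw_cat !evw_flatten big_allpairs_dep !big_map.
rewrite !phiD -!mulgA; congr (_ * (_ * (_ * _))).
- apply: prod_phi => k _; apply: prod_phi => l; rewrite mem_iota => /andP[kl _].
  by apply: evw_wpow; rewrite evw_comm !evw_gen ha //; rewrite addn2 in kl.
- by apply: prod_phi => k _; apply: evw_wpow; rewrite /comm3 !evw_comm !evw_gen.
- apply: prod_phi => k _; apply: evw_wpow.
  by rewrite /comm3 !evw_comm evw_cat evw_geninv !evw_gen.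
- by apply: prod_phi => k _; apply: evw_wpow; rewrite !evw_comm !evw_gen.
Qed.

Lemma detect n a b c d (wa : nat -> nat -> R) (wb wc wd wy : nat -> R) :
  (forall k l, (k.+1 < l)%N -> [~ s k, s l] = phi (wa k l)) ->
  (forall k, [~ s k, s k.+1, s k] = phi (wb k)) ->
  (forall k, [~ s k, s k.+1, s k.+1] = phi (wy k)) ->
  (forall k, [~ s k, s k.+1, s k * (s k.+1)^-1] = phi (wc k)) ->
  (forall k, [~ [~ s k, s k.+1], [~ s k.+1, s k.+2]] = phi (wd k)) ->
  inRF n (theElement n a b c d) -> phi (weighted_exponents n a b c d wa wb wc wd) = 1.
Proof.
move=> ha hb hy hc hd inRF_el; rewrite -evw_theElement //; apply: evw_inRF inRF_el.
move=> r [[i [j [_ ij _ ->]]] | [[i [_ _ ->]] | [[i [_ _ ->]] | [i [_ _ ->]]]]].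
- by rewrite evw_comm !evw_gen ha //; apply: phi_central.
- by rewrite /comm3 !evw_comm !evw_gen hb; apply: phi_central.
- by rewrite /comm3 !evw_comm !evw_gen hy; apply: phi_central.
- by rewrite !evw_comm !evw_gen hd; apply: phi_central.
Qed.
End CentralValues.

Lemma sum_mul0rz (R : zmodType) (t : seq nat) (f : nat -> int) :
  (\sum_(k <- t) (0 : R) *~ f k)%R = 0%R.
Proof. by rewrite big1 // => k _; rewrite mul0rz. Qed.

Lemma sum_single (R : zmodType) (t : seq nat) i (F : nat -> R) :
  uniq t -> i \in t -> (forall k, k != i -> F k = 0%R) -> (\sum_(k <- t) F k)%R = F i.
Proof. by move=> ut it F0; rewrite (bigD1_seq i) //= big1 ?addr0 // => k /F0. Qed.

Lemma int_of_Z_eq0 z : int_of_Z z = 0%R -> z = Z0.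
Proof. by move=> z0; apply: (can_inj int_of_ZK); rewrite z0. Qed.

(* The group UT_5(R) of upper unitriangular 5x5 matrices over a commutative
   ring R, in coordinates u_ij (i < j); corner r = 1 + r E15 is central. *)
Section UnitriangularFive.
Local Open Scope ring_scope.
Variable R : comPzRingType.

Record ut5 := UT5 {
  u12 : R; u13 : R; u14 : R; u15 : R; u23 : R; u24 : R; u25 : R;
  u34 : R; u35 : R; u45 : R }.

Definition ut5_coords (x : ut5) :=
  (u12 x, u13 x, u14 x, u15 x, u23 x, u24 x, u25 x, u34 x, u35 x, u45 x).

Definition ut5_of_coords c : ut5 :=
  let: (x12, x13, x14, x15, x23, x24, x25, x34, x35, x45) := c in
  UT5 x12 x13 x14 x15 x23 x24 x25 x34 x35 x45.

Lemma ut5_coordsK : cancel ut5_coords ut5_of_coords.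
Proof. by case. Qed.

HB.instance Definition _ := Choice.copy ut5 (can_type ut5_coordsK).

Definition ut5_one := UT5 0 0 0 0 0 0 0 0 0 0.

(* matrix product: (xy)_ij = x_ij + y_ij + sum_(i<k<j) x_ik y_kj *)
Definition ut5_mul (x y : ut5) := UT5
  (u12 x + u12 y)
  (u13 x + u13 y + u12 x * u23 y)
  (u14 x + u14 y + u12 x * u24 y + u13 x * u34 y)
  (u15 x + u15 y + u12 x * u25 y + u13 x * u35 y + u14 x * u45 y)
  (u23 x + u23 y)
  (u24 x + u24 y + u23 x * u34 y)
  (u25 x + u25 y + u23 x * u35 y + u24 x * u45 y)
  (u34 x + u34 y)
  (u35 x + u35 y + u34 x * u45 y)
  (u45 x + u45 y).

(* inverse: (1 + N)^-1 = 1 - N + N^2 - N^3 + N^4 *)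
Definition ut5_inv (x : ut5) := UT5
  (- u12 x)
  (- u13 x + u12 x * u23 x)
  (- u14 x + u12 x * u24 x + u13 x * u34 x - u12 x * u23 x * u34 x)
  (- u15 x + u12 x * u25 x + u13 x * u35 x + u14 x * u45 x
   - u12 x * u23 x * u35 x - u12 x * u24 x * u45 x - u13 x * u34 x * u45 x
   + u12 x * u23 x * u34 x * u45 x)
  (- u23 x)
  (- u24 x + u23 x * u34 x)
  (- u25 x + u23 x * u35 x + u24 x * u45 x - u23 x * u34 x * u45 x)
  (- u34 x)
  (- u35 x + u34 x * u45 x)
  (- u45 x).

Lemma ut5_mulA : associative ut5_mul.
Proof.
by move=> x y z; case: x; case: y; case: z => *; rewrite /ut5_mul /=; congr UT5; ring.
Qed.

Lemma ut5_mul1 : left_id ut5_one ut5_mul.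
Proof. by case=> *; rewrite /ut5_mul /=; congr UT5; ring. Qed.

Lemma ut5_mulr1 : right_id ut5_one ut5_mul.
Proof. by case=> *; rewrite /ut5_mul /=; congr UT5; ring. Qed.

Lemma ut5_mulV : left_inverse ut5_one ut5_inv ut5_mul.
Proof. by case=> *; rewrite /ut5_mul /=; congr UT5; ring. Qed.

Lemma ut5_mulrV : right_inverse ut5_one ut5_inv ut5_mul.
Proof. by case=> *; rewrite /ut5_mul /=; congr UT5; ring. Qed.

HB.instance Definition _ := isGroup.Build ut5
  ut5_mulA ut5_mul1 ut5_mulr1 ut5_mulV ut5_mulrV.

Lemma ut5_mulE x y : (x * y)%g = ut5_mul x y.
Proof. by []. Qed.

Definition corner (r : R) : ut5 := UT5 0 0 0 r 0 0 0 0 0 0.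

Lemma cornerD r1 r2 : corner (r1 + r2) = (corner r1 * corner r2)%g.
Proof. by rewrite ut5_mulE /ut5_mul /=; congr UT5; ring. Qed.

Lemma corner_central r : central (corner r).
Proof. by case=> *; rewrite /commute !ut5_mulE /ut5_mul /=; congr UT5; ring. Qed.

Lemma corner_eq1 r : corner r = 1%g -> r = 0.
Proof. by move/(congr1 u15). Qed.
End UnitriangularFive.

Ltac split_support := repeat (case: eqP => ?; subst); try lia.

(* Detecting a_ij: s_i = 1 + E12 and s_j = 1 + E25 over Z, all other
   generators trivial; only [s_i, s_j] = 1 + E15 is nontrivial. *)
Section FarCommutatorTest.
Local Open Scope group_scope.
Variables i j : nat.
Hypothesis ij : (i.+1 < j)%N.

Definition far_assignment (k : nat) : ut5 int :=
  if k == i then UT5 1 0 0 0 0 0 0 0 0 0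
  else if k == j then UT5 0 0 0 0 0 0 1 0 0 0 else 1.

Local Notation s := far_assignment.

Lemma far_adjacent k : [~ s k, s k.+1] = 1.
Proof. by rewrite /s; split_support; apply/eqP; vm_compute. Qed.

Lemma far_values k l : (k.+1 < l)%N ->
  [~ s k, s l] = corner (if k == i then if l == j then 1 else 0 else 0)%R.
Proof. by move=> kl; rewrite /s; split_support; apply/eqP; vm_compute. Qed.

Local Open Scope Z_scope.
Lemma far_test n a b c d : (1 <= i)%N -> (j <= n - 1)%N ->
  inRF n (theElement n a b c d) -> a i j = 0.
Proof.
move=> i1 jn inRF_el.
have adj3 k t : [~ s k, s k.+1, t] = corner 0%R by rewrite far_adjacent comm1g.
have := detect (@cornerD _) (@corner_central _) far_values (fun k => adj3 k _)
  (fun k => adj3 k _) (fun k => adj3 k _) (fun k => adj3 k _) inRF_el.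
move/corner_eq1; rewrite /weighted_exponents.
have i_mem : i \in iota 1 (n - 1) by rewrite mem_iota; lia.
have j_mem : j \in iota (i + 2) (n - 2 - i) by rewrite mem_iota; lia.
rewrite !sum_mul0rz !addr0 (sum_single (i := i)) ?iota_uniq //; last first.
  by move=> k /negPf ->; apply: sum_mul0rz.
rewrite (sum_single (i := j)) ?iota_uniq //; last first.
  by move=> l /negPf ->; rewrite eqxx mul0rz.
by rewrite !eqxx intz; apply: int_of_Z_eq0.
Qed.
End FarCommutatorTest.

Section AdjacentPairTest.
Local Open Scope group_scope.
Variables (x y : ut5 int) (tx ty tc : int).
Hypotheses (hx : [~ x, y, x] = corner tx) (hy : [~ x, y, y] = corner ty)
  (hc : [~ x, y, x * y^-1] = corner tc).
Variable i : nat.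

Definition pair_assignment (k : nat) : ut5 int :=
  if k == i then x else if k == i.+1 then y else 1.

Local Notation s := pair_assignment.

Lemma pair_far k l : (k.+1 < l)%N -> [~ s k, s l] = corner 0%R.
Proof. by move=> kl; rewrite /s; split_support; rewrite ?commg1 ?comm1g. Qed.

Lemma pair_adjacent k : k != i -> [~ s k, s k.+1] = 1.
Proof. by move=> /eqP ki; rewrite /s; split_support; rewrite ?commg1 ?comm1g. Qed.

Lemma pair_value (t : ut5 int -> ut5 int -> ut5 int) v k :
  [~ x, y, t x y] = corner v ->
  [~ s k, s k.+1, t (s k) (s k.+1)] = corner (if k == i then v else 0%R).
Proof.
move=> hv; have [->|ki] := eqVneq k i; last by rewrite pair_adjacent // comm1g.
by rewrite /s; split_support.
Qed.

Lemma pair_double k : [~ [~ s k, s k.+1], [~ s k.+1, s k.+2]] = corner 0%R.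
Proof.
have [->|ki] := eqVneq k i; last by rewrite pair_adjacent // comm1g.
by rewrite [[~ s i.+1, _]]pair_adjacent ?commg1 //; apply/eqP; lia.
Qed.

Lemma pair_test n a b c d : (1 <= i)%N -> (i <= n - 2)%N ->
  inRF n (theElement n a b c d) -> (tx * int_of_Z (b i) + tc * int_of_Z (c i) = 0)%R.
Proof.
move=> i1 in2 inRF_el.
have := detect (@cornerD _) (@corner_central _) pair_far
  (fun k => pair_value (t := fun u _ => u) k hx) (fun k => pair_value (t := fun _ v => v) k hy)
  (fun k => pair_value (t := fun u v => u * v^-1) k hc) pair_double inRF_el.
move/corner_eq1; rewrite /weighted_exponents.
have i_mem : i \in iota 1 (n - 2) by rewrite mem_iota; lia.
rewrite big1 => [|k _]; last exact: sum_mul0rz.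
rewrite sum_mul0rz add0r addr0 !(sum_single (i := i)) ?iota_uniq //;
  try by move=> k /negPf ->; rewrite mul0rz.
by rewrite !eqxx !mulrzz.
Qed.
End AdjacentPairTest.

Section AdjacentTest.
Local Open Scope Z_scope.

(* x = 1 + E12 + E23, y = 1 + E35 gives -b_i - c_i = 0;
   x = 1 + E12, y = 1 + E23 + E35 gives -c_i = 0 *)
Lemma adjacent_test n a b c d i : (1 <= i)%N -> (i <= n - 2)%N ->
  inRF n (theElement n a b c d) -> b i = 0 /\ c i = 0.
Proof.
move=> i1 in2 inRF_el.
have hB := pair_test (x := UT5 1 0 0 0 1 0 0 0 0 0) (y := UT5 0 0 0 0 0 0 0 0 1 0)
  (tx := (-1)%R) (ty := 0%R) (tc := (-1)%R) ltac:(by apply/eqP; vm_compute)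
  ltac:(by apply/eqP; vm_compute) ltac:(by apply/eqP; vm_compute) i1 in2 inRF_el.
have hC := pair_test (x := UT5 1 0 0 0 0 0 0 0 0 0) (y := UT5 0 0 0 0 1 0 0 0 1 0)
  (tx := 0%R) (ty := 1%R) (tc := (-1)%R) ltac:(by apply/eqP; vm_compute)
  ltac:(by apply/eqP; vm_compute) ltac:(by apply/eqP; vm_compute) i1 in2 inRF_el.
by split; apply: int_of_Z_eq0; lia.
Qed.
End AdjacentTest.

(* Detecting d_i mod 2: over F_2, s_i = 1 + E12, s_(i+1) = 1 + E23 + E45,
   s_(i+2) = 1 + E34; only [[s_i, s_(i+1)], [s_(i+1), s_(i+2)]] = 1 + E15
   survives. *)
Section TripleTest.
Local Open Scope group_scope.
Variable i : nat.

Definition triple_assignment (k : nat) : ut5 'F_2 :=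
  if k == i then UT5 1 0 0 0 0 0 0 0 0 0
  else if k == i.+1 then UT5 0 0 0 0 1 0 0 0 0 1
  else if k == i.+2 then UT5 0 0 0 0 0 0 0 1 0 0 else 1.

Local Notation s := triple_assignment.

Lemma triple_far k l : (k.+1 < l)%N -> [~ s k, s l] = corner 0%R.
Proof. by move=> kl; rewrite /s; split_support; apply/eqP; vm_compute. Qed.

Lemma triple_x k : [~ s k, s k.+1, s k] = corner 0%R.
Proof. by rewrite /s; split_support; apply/eqP; vm_compute. Qed.

Lemma triple_y k : [~ s k, s k.+1, s k.+1] = corner 0%R.
Proof. by rewrite /s; split_support; apply/eqP; vm_compute. Qed.

Lemma triple_c k : [~ s k, s k.+1, s k * (s k.+1)^-1] = corner 0%R.
Proof. by rewrite /s; split_support; apply/eqP; vm_compute. Qed.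

Lemma triple_d k :
  [~ [~ s k, s k.+1], [~ s k.+1, s k.+2]] = corner (if k == i then 1 else 0)%R.
Proof. by rewrite /s; split_support; apply/eqP; vm_compute. Qed.

Local Open Scope Z_scope.
Lemma triple_test n a b c d : (1 <= i)%N -> (i <= n - 3)%N -> d i = 0 \/ d i = 1 ->
  inRF n (theElement n a b c d) -> d i = 0.
Proof.
move=> i1 in3 d01 inRF_el.
have := detect (@cornerD _) (@corner_central _) triple_far triple_x triple_y triple_c
  triple_d inRF_el.
move/corner_eq1; rewrite /weighted_exponents.
have i_mem : i \in iota 1 (n - 3) by rewrite mem_iota; lia.
rewrite big1 => [|k _]; last exact: sum_mul0rz.
rewrite !sum_mul0rz !add0r (sum_single (i := i)) ?iota_uniq //; last first.
  by move=> k /negPf ->; rewrite mul0rz.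
by rewrite eqxx; case: d01 => -> //= /eqP; rewrite mulr1z oner_eq0.
Qed.
End TripleTest.
End TestGroups.
Import TestGroups.

Theorem mainTheorem5 (n : nat) (a : nat -> nat -> Z) (b c d : nat -> Z) :
  (3 <= n)%N ->
  (forall i, (1 <= i)%N -> (i <= n - 3)%N -> d i = 0%Z \/ d i = 1%Z) ->
  inRF n (theElement n a b c d) ->
  (forall i j, (1 <= i)%N -> (i.+1 < j)%N -> (j <= n - 1)%N -> a i j = 0%Z) /\
  (forall i, (1 <= i)%N -> (i <= n - 2)%N -> b i = 0%Z /\ c i = 0%Z) /\
  (forall i, (1 <= i)%N -> (i <= n - 3)%N -> d i = 0%Z).
Proof.
move=> _ d01 inRF_el; split; [|split].
- by move=> i j i1 ij jn; exact: (far_test ij i1 jn inRF_el).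
- by move=> i i1 in2; exact: (adjacent_test i1 in2 inRF_el).
- by move=> i i1 in3; exact: (triple_test i1 in3 (d01 i i1 in3) inRF_el).
Qed.
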